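(* Let $b$ be a solvable board position on the 37-hole hexagon board $H_X$. Suppose $b$ is invariant under the $180^\circ$ rotation $(a,b)\mapsto(-a,-b)$, or invariant under at least one diagonal reflection. This covers exactly symmetry types 1, 2, 3, 5, 7, 8 of the hexagon board: - full hexagonal symmetry; - $60^\circ$ rotation; - $120^\circ$ rotation together with a diagonal reflection; - both an orthogonal and the perpendicular diagonal reflection; - $180^\circ$ rotation; - a single diagonal reflection. Then $b$ lies in position class A.
   Context: Use axial coordinates on the triangular lattice. The hexagon board is $H_X=\{(a,c)\in\mathbb{Z}^2: |a|\le3,\ |c|\le3,\ |a+c|\le3\}$, which has 37 holes. The lattice lines are the lines in the three directions $(1,0),(0,1),(1,-1)$. A board position is a subset of $H_X$ (the occupied holes). A jump: given $d\in\{\pm(1,0),\pm(0,1),\pm(1,-1)\}$ and $p$ with $p,p+d,p+2d\in H_X$, $p,p+d$ occupied and $p+2d$ empty, the jump removes the pegs at $p,p+d$ and places a peg at $p+2d$. A position is solvable if some sequence of jumps leads to exactly one peg. The symmetries of $H_X$ form the dihedral group of order 12 of the regular hexagon, about the centre $(0,0)$. A reflection is called orthogonal if its mirror line is parallel to a lattice line. It is called diagonal if its mirror line is perpendicular to a lattice line. Position class A. For $i\in\{0,1,2\}$ let $N_i$ be the number of pegs of $b$ at holes $(a,c)$ with $a-c\equiv i\pmod 3$. The position $b$ lies in position class A if $N_1+N_2$ is even and $N_0+N_2$ and $N_0+N_1$ are odd. This is the position class of a single peg at $(0,0)$. *)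

From Stdlib Require Import Bool ZArith List Relations.
Import ListNotations.
Open Scope Z_scope.

(* Axial coordinates (a,c); basis e1 = (1,0) at 0 degrees, e2 = (0,1) at 60 degrees,
   so that the lattice directions are (1,0), (0,1), (1,-1). *)
Definition pt := (Z * Z)%type.

Definition inH (p : pt) : bool :=
  let '(a, c) := p in
  (Z.abs a <=? 3) && (Z.abs c <=? 3) && (Z.abs (a + c) <=? 3).

Definition rng : list Z := map (fun n => Z.of_nat n - 3) (seq 0 7).

Definition holes : list pt := filter inH (list_prod rng rng).

Definition position := pt -> bool.

Definition is_position (b : position) : Prop := forall p, b p = true -> inH p = true.

Definition padd (p q : pt) : pt := (fst p + fst q, snd p + snd q).

Definition dirs : list pt := [(1,0); (-1,0); (0,1); (0,-1); (1,-1); (-1,1)].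

Definition pt_eqb (p q : pt) : bool := (fst p =? fst q) && (snd p =? snd q).

Definition jump (b b' : position) : Prop :=
  exists d p, In d dirs /\
    inH p = true /\ inH (padd p d) = true /\ inH (padd (padd p d) d) = true /\
    b p = true /\ b (padd p d) = true /\ b (padd (padd p d) d) = false /\
    forall q, b' q =
      if orb (pt_eqb q p) (pt_eqb q (padd p d)) then false
      else if pt_eqb q (padd (padd p d) d) then true
      else b q.

Definition npegs (b : position) : nat := length (filter b holes).

Definition solvable (b : position) : Prop :=
  exists b', clos_refl_trans position jump b b' /\ npegs b' = 1%nat.

Definition Ncls (b : position) (i : Z) : nat :=
  length (filter (fun p : pt => andb (b p) ((fst p - snd p) mod 3 =? i)) holes).

Definition classA (b : position) : Prop :=
  Nat.even (Ncls b 1 + Ncls b 2) = true /\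
  Nat.odd (Ncls b 0 + Ncls b 2) = true /\
  Nat.odd (Ncls b 0 + Ncls b 1) = true.

Definition rot180 (p : pt) : pt := (- fst p, - snd p).

(* The three diagonal reflections (mirror line perpendicular to a lattice line):
   mirror at 30 deg (perp. to (1,-1)): (a,c) |-> (c,a);
   mirror at 90 deg (perp. to (1,0)):  (a,c) |-> (-a-c,c);
   mirror at 150 deg (perp. to (0,1)): (a,c) |-> (a,-a-c). *)
Definition diag_refl1 (p : pt) : pt := (snd p, fst p).
Definition diag_refl2 (p : pt) : pt := (- fst p - snd p, snd p).
Definition diag_refl3 (p : pt) : pt := (fst p, - fst p - snd p).

Definition invariant (b : position) (g : pt -> pt) : Prop := forall p, b (g p) = b p.

(* Colour each hole by the residue of a - c modulo 3.  The three holes of a jump lie on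
   a lattice line, and a lattice step changes a - c by 1 or 2 modulo 3, so they carry
   three different colours: every jump flips the parities of N0, N1 and N2 at once.
   Hence the parity vector of a solvable position is that of a single peg, (1,0,0),
   (0,1,0) or (0,0,1), or its complement.  The half-turn and the diagonal reflections
   send a - c to c - a, so an invariant position has N1 = N2, which leaves only (1,0,0)
   and (0,1,1): position class A. *)

From Stdlib Require Import ZArith List Relations.
From Stdlib Require Import Bool Permutation FinFun Lia.
Import ListNotations.
Open Scope Z_scope.

Lemma odd_length_filter_xorb {A} (f g : A -> bool) (l : list A) :
  Nat.odd (length (filter g l)) =
  xorb (Nat.odd (length (filter f l)))
       (Nat.odd (length (filter (fun x => xorb (f x) (g x)) l))).
Proof.
  induction l as [|x l IH]; [reflexivity|]; cbn.
  destruct (f x), (g x); cbn; rewrite ?Nat.odd_succ, <- ?Nat.negb_odd, IH;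
    destruct (Nat.odd (length (filter f l))),
      (Nat.odd (length (filter (fun x => xorb (f x) (g x)) l))); reflexivity.
Qed.

Lemma length_filter_Permutation {A} (f : A -> bool) (l l' : list A) :
  Permutation l l' -> length (filter f l) = length (filter f l').
Proof.
  induction 1 as [| x | x y | ]; cbn; try congruence.
  - destruct (f x); cbn; congruence.
  - destruct (f x), (f y); reflexivity.
Qed.

Lemma NoDup_list_prod {A B} (l : list A) (l' : list B) :
  NoDup l -> NoDup l' -> NoDup (list_prod l l').
Proof.
  intros Hl Hl'; induction Hl as [|x l Hx Hl IH]; cbn; [constructor|].
  apply NoDup_app; [| exact IH |].
  - apply Injective_map_NoDup; [intros y y' E; injection E; easy | exact Hl'].
  - intros [x' y] Hin Hin'. apply in_map_iff in Hin as (? & E & _).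
    injection E as <- _. apply in_prod_iff in Hin' as [? _]. contradiction.
Qed.

Lemma pt_eqb_spec (p q : pt) : reflect (p = q) (pt_eqb p q).
Proof.
  destruct p as [a c], q as [a' c']; unfold pt_eqb; cbn.
  destruct (Z.eqb_spec a a'), (Z.eqb_spec c c'); constructor; congruence.
Qed.

Lemma length_filter_in_sublist (P : pt -> bool) (l s : list pt) :
  NoDup l -> NoDup s -> incl s l ->
  length (filter (fun x => existsb (pt_eqb x) s && P x) l) = length (filter P s).
Proof.
  intros Hl Hs Hsl. apply Permutation_length, NoDup_Permutation.
  1,2: apply NoDup_filter; assumption.
  intro x. rewrite !filter_In, andb_true_iff, existsb_exists.
  split.
  - intros (_ & (y & Hy & Exy) & HP). apply (reflect_iff _ _ (pt_eqb_spec x y)) in Exy.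
    subst; tauto.
  - intros [Hx HP]. repeat split; auto. exists x. split; [exact Hx|].
    destruct (pt_eqb_spec x x); congruence.
Qed.

Definition residue (p : pt) : Z := (fst p - snd p) mod 3.

Lemma Ncls_residue (b : position) (i : Z) :
  Ncls b i = length (filter (fun p => b p && (residue p =? i)) holes).
Proof. reflexivity. Qed.

Lemma inH_spec (a c : Z) :
  inH (a, c) = true <-> Z.abs a <= 3 /\ Z.abs c <= 3 /\ Z.abs (a + c) <= 3.
Proof. unfold inH. rewrite !andb_true_iff, !Z.leb_le. tauto. Qed.

Lemma In_rng (a : Z) : In a rng <-> Z.abs a <= 3.
Proof.
  unfold rng. rewrite in_map_iff. split.
  - intros (n & <- & Hn). apply in_seq in Hn. lia.
  - intro Ha. exists (Z.to_nat (a + 3)). rewrite in_seq. lia.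
Qed.

Lemma In_holes (p : pt) : In p holes <-> inH p = true.
Proof.
  destruct p as [a c]. unfold holes.
  rewrite filter_In, (in_prod_iff rng rng a c), !In_rng, inH_spec. lia.
Qed.

Lemma NoDup_holes : NoDup holes.
Proof.
  apply NoDup_filter, NoDup_list_prod; apply Injective_map_NoDup, seq_NoDup;
    intros n m; lia.
Qed.

Lemma residue_jump_cells (p d : pt) : In d dirs ->
  residue p <> residue (padd p d) /\
  residue p <> residue (padd (padd p d) d) /\
  residue (padd p d) <> residue (padd (padd p d) d).
Proof.
  destruct p as [a c]. intros Hd.
  repeat destruct Hd as [<- | Hd]; try contradiction;
    unfold residue, padd; cbn; Z.div_mod_to_equations; lia.
Qed.

Lemma residue_range (p : pt) : 0 <= residue p < 3.
Proof. apply Z.mod_pos_bound; lia. Qed.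

Lemma length_filter_residue_distinct (p q r : pt) (i : Z) : 0 <= i < 3 ->
  residue p <> residue q -> residue p <> residue r -> residue q <> residue r ->
  length (filter (fun x => residue x =? i) [p; q; r]) = 1%nat.
Proof.
  intros Hi Hpq Hpr Hqr.
  pose proof (residue_range p); pose proof (residue_range q); pose proof (residue_range r).
  cbn; destruct (Z.eqb_spec (residue p) i), (Z.eqb_spec (residue q) i),
    (Z.eqb_spec (residue r) i); cbn; lia.
Qed.

Definition jump_cells (p d : pt) : list pt := [p; padd p d; padd (padd p d) d].

Lemma jump_odd_Ncls (b b' : position) (i : Z) : jump b b' -> 0 <= i < 3 ->
  Nat.odd (Ncls b' i) = negb (Nat.odd (Ncls b i)).
Proof.
  intros (d & p & Hd & Hp & Hp1 & Hp2 & Hb0 & Hb1 & Hb2 & Hb') Hi.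
  destruct (residue_jump_cells p d Hd) as (R01 & R02 & R12).
  rewrite !Ncls_residue, (odd_length_filter_xorb (fun x => b x && (residue x =? i))).
  rewrite (filter_ext (fun x => xorb (b x && (residue x =? i)) (b' x && (residue x =? i)))
                     (fun x => existsb (pt_eqb x) (jump_cells p d) && (residue x =? i))).
  - rewrite length_filter_in_sublist.
    + unfold jump_cells. rewrite length_filter_residue_distinct by assumption.
      apply xorb_true_r.
    + exact NoDup_holes.
    + repeat constructor; cbn; intuition congruence.
    + intros x Hx. apply In_holes. repeat destruct Hx as [<- | Hx]; easy.
  - intro x. rewrite Hb'. unfold jump_cells; cbn [existsb].
    destruct (residue x =? i); [rewrite !andb_true_r, orb_false_r | now rewrite !andb_false_r].
    destruct (pt_eqb_spec x p) as [->|]; [now rewrite Hb0|].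
    destruct (pt_eqb_spec x (padd p d)) as [->|]; [now rewrite Hb1|].
    destruct (pt_eqb_spec x (padd (padd p d) d)) as [->|]; [now rewrite Hb2|].
    apply xorb_nilpotent.
Qed.

Lemma rt_jump_odd_Ncls (b b' : position) : clos_refl_trans position jump b b' ->
  exists flip : bool, forall i, 0 <= i < 3 ->
    Nat.odd (Ncls b' i) = xorb flip (Nat.odd (Ncls b i)).
Proof.
  induction 1 as [x y H | x | x y z _ [k1 IH1] _ [k2 IH2]].
  - exists true. intros i Hi. now rewrite (jump_odd_Ncls _ _ _ H Hi).
  - now exists false.
  - exists (xorb k1 k2). intros i Hi. rewrite IH2, IH1 by exact Hi.
    now destruct k1, k2, (Nat.odd (Ncls x i)).
Qed.

Lemma length_filter_residue_split (b : position) (l : list pt) :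
  length (filter b l) =
  (length (filter (fun p => b p && (residue p =? 0)%Z) l) +
   length (filter (fun p => b p && (residue p =? 1)%Z) l) +
   length (filter (fun p => b p && (residue p =? 2)%Z) l))%nat.
Proof.
  induction l as [|x l IH]; [reflexivity|]; cbn.
  destruct (b x); cbn; [|exact IH].
  pose proof (residue_range x).
  destruct (Z.eqb_spec (residue x) 0), (Z.eqb_spec (residue x) 1),
    (Z.eqb_spec (residue x) 2); cbn; lia.
Qed.

Lemma npegs_Ncls (b : position) : npegs b = (Ncls b 0 + Ncls b 1 + Ncls b 2)%nat.
Proof. apply length_filter_residue_split. Qed.

Definition residue_reversing (g : pt -> pt) : Prop :=
  (forall p, g (g p) = p) /\ (forall p, inH (g p) = inH p) /\
  (forall p, residue (g p) = (- residue p) mod 3).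

Lemma board_symmetries_residue_reversing :
  residue_reversing rot180 /\ residue_reversing diag_refl1 /\
  residue_reversing diag_refl2 /\ residue_reversing diag_refl3.
Proof.
  repeat split; intros [a c];
    unfold rot180, diag_refl1, diag_refl2, diag_refl3, residue; cbn [fst snd].
  all: first
    [ apply eq_true_iff_eq; rewrite !inH_spec; lia
    | f_equal; ring
    | Z.div_mod_to_equations; lia ].
Qed.

Lemma Ncls1_eq_Ncls2 (g : pt -> pt) (b : position) :
  residue_reversing g -> invariant b g -> Ncls b 1 = Ncls b 2.
Proof.
  intros (Hgg & HgH & Hgr) Hb.
  assert (Hperm : Permutation holes (map g holes)).
  { apply NoDup_Permutation; [exact NoDup_holes| |].
    - apply Injective_map_NoDup; [|exact NoDup_holes].
      intros x y E. now rewrite <- (Hgg x), <- (Hgg y), E.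
    - intro x. rewrite in_map_iff. split.
      + intro Hx. exists (g x). now rewrite Hgg, In_holes, HgH, <- In_holes.
      + intros (y & <- & Hy). now rewrite In_holes, HgH, <- In_holes. }
  rewrite !Ncls_residue, (length_filter_Permutation _ _ _ Hperm), filter_map_swap,
    length_map.
  f_equal. apply filter_ext. intro x. rewrite Hb, Hgr. f_equal.
  pose proof (residue_range x).
  destruct (Z.eqb_spec ((- residue x) mod 3) 1), (Z.eqb_spec (residue x) 2);
    Z.div_mod_to_equations; lia.
Qed.

Lemma one_peg_parity_flip (n0 n1 n2 m0 m1 m2 : nat) (flip : bool) :
  n1 = n2 -> (m0 + m1 + m2 = 1)%nat ->
  Nat.odd m0 = xorb flip (Nat.odd n0) ->
  Nat.odd m1 = xorb flip (Nat.odd n1) ->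
  Nat.odd m2 = xorb flip (Nat.odd n2) ->
  Nat.even (n1 + n2) = true /\ Nat.odd (n0 + n2) = true /\ Nat.odd (n0 + n1) = true.
Proof.
  intros <- Hone F0 F1 F2.
  assert (Hm : m0 = 1%nat /\ m1 = 0%nat).
  { assert (E : Nat.odd m1 = Nat.odd m2) by congruence.
    destruct m1 as [|[|]], m2 as [|[|]]; cbn in E; lia || discriminate. }
  destruct Hm as [-> ->]; cbn in F0, F1.
  rewrite Nat.even_add, Nat.odd_add, eqb_reflx.
  destruct flip, (Nat.odd n0), (Nat.odd n1); easy.
Qed.

Theorem theorem3 (b : position) :
  is_position b ->
  solvable b ->
  (invariant b rot180 \/ invariant b diag_refl1 \/ invariant b diag_refl2 \/
   invariant b diag_refl3) ->
  classA b.
Proof.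
  (* Pegs off the board are never counted. *)
  intros _ (b' & Hrt & Hone) Hsym.
  destruct (rt_jump_odd_Ncls _ _ Hrt) as [flip Hflip].
  assert (N12 : Ncls b 1 = Ncls b 2).
  { destruct board_symmetries_residue_reversing as (S1 & S2 & S3 & S4).
    destruct Hsym as [H|[H|[H|H]]]; apply Ncls1_eq_Ncls2 in H; assumption. }
  rewrite npegs_Ncls in Hone.
  apply (one_peg_parity_flip _ _ _ _ _ _ flip N12 Hone); apply Hflip; lia.
Qed.
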